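(* Let $s\ge0$, $p\in[1,+\infty)$, $\beta\in\mathbb R\setminus\{0\}$, $\varepsilon\in(0,1)$ and $f\in B^{s,\infty}_p(\mathbb R^d)$. Then $$E(\beta,f)\subset\left\{x\in\mathbb R^d:\ \liminf_{j\to+\infty}\ \sup_{l\in[(1-\varepsilon)j,(1+\varepsilon)j]\cap\mathbb N}\frac{\log|Q_lf(x)|}{j\log2}\ge\beta\right\}.$$
   Context: Standing setup. $(V_j)_{j\in\mathbb Z}$ is an orthogonal multiresolution analysis of $L^2(\mathbb R^d)$ with scaling function $\varphi$ (the integer translates of $\varphi$ form an orthonormal basis of $V_0$), and $\psi^{(1)},\dots,\psi^{(2^d-1)}$ are associated wavelets: the functions $2^{dj/2}\psi^{(i)}(2^j\cdot-k)$ form an orthonormal basis of $L^2(\mathbb R^d)$. The functions $\varphi,\psi^{(i)}$ are smooth, with fast decay: for every $N\ge0$ there is $C_N$ with $|\psi^{(i)}(x)|\le C_N(1+\|x\|)^{-N}$. For $j\ge0$, $k\in\mathbb Z^d$, the dyadic cube $\lambda=(j,k)$ is $\prod_{m=1}^d[k_m2^{-j},(k_m+1)2^{-j})$; $\Lambda_j$ is the set of such cubes; $\psi^{(i)}_\lambda(x)=\psi^{(i)}(2^jx-k)$. For $f$ set $C_k=\int\overline{\varphi(x-k)}f$, $c^{(i)}_\lambda=2^{dj}\int\overline{\psi^{(i)}_\lambda}f$, $Q_lf(x)=\sum_i\sum_{\lambda\in\Lambda_l}c^{(i)}_\lambda\psi^{(i)}_\lambda(x)$, $P_jf(x)=\sum_kC_k\varphi(x-k)+\sum_{0\le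 l<j}Q_lf(x)$, and when $(P_jf(x))_j$ converges $R_jf(x)=\sum_{l\ge j}Q_lf(x)$. $B^{s,\infty}_p(\mathbb R^d)$ is the set of $f$ with $(C_k)\in\ell^p$ and $\sup_{j}2^{(s-d/p)j}(\sum_i\sum_{\lambda\in\Lambda_j}|c^{(i)}_\lambda|^p)^{1/p}<\infty$. Level set (with $\log0=-\infty$): for $\beta>0$, $E(\beta,f)=\{x:\lim_j\frac{\log|P_jf(x)|}{j\log2}=\beta\}$; for $\beta<0$, $E(\beta,f)=\{x:(P_jf(x))_j\text{ converges and }\lim_j\frac{\log|R_jf(x)|}{j\log2}=\beta\}$. *)

From Stdlib Require Import Reals Lra Lia ZArith List ClassicalEpsilon.
Import ListNotations.
Open Scope R_scope.

Definition Cx : Type := (R * R)%type.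
Definition C0 : Cx := (0, 0).
Definition Cadd (a b : Cx) : Cx := (fst a + fst b, snd a + snd b).
Definition Cmul (a b : Cx) : Cx :=
  (fst a * fst b - snd a * snd b, fst a * snd b + snd a * fst b).
Definition Cnorm (a : Cx) : R := sqrt (fst a ^ 2 + snd a ^ 2).

Definition Ccv (u : nat -> Cx) (L : Cx) : Prop :=
  Un_cv (fun n => fst (u n)) (fst L) /\ Un_cv (fun n => snd (u n)) (snd L).
Definition Rlim (u : nat -> R) : R :=
  epsilon (inhabits 0) (fun L => Un_cv u L).
Definition Clim (u : nat -> Cx) : Cx :=
  (Rlim (fun n => fst (u n)), Rlim (fun n => snd (u n))).

Definition Csum_range (n : nat) (F : nat -> Cx) : Cx :=
  fold_right (fun i acc => Cadd (F i) acc) C0 (seq 0 n).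
Definition Rsum_range (n : nat) (F : nat -> R) : R :=
  fold_right (fun i acc => F i + acc) 0 (seq 0 n).

(** Points of R^d are x : nat -> R with x m = 0 for m >= d;
    points of Z^d are k : nat -> Z (only coordinates m < d are used). *)
Definition inRd (d : nat) (x : nat -> R) : Prop :=
  forall m, (d <= m)%nat -> x m = 0.
Definition eucl_norm (d : nat) (x : nat -> R) : R :=
  sqrt (Rsum_range d (fun m => x m ^ 2)).

(** Sums over the box {-N,...,N}^d of Z^d (coordinates >= d are 0). *)
Fixpoint box_sum (d N : nat) (F : (nat -> Z) -> Cx) : Cx :=
  match d with
  | O => F (fun _ => 0%Z)
  | S d' => Csum_range (2 * N + 1) (fun n =>
      box_sum d' N (fun k => F (fun m =>
        if Nat.eqb m d' then (Z.of_nat n - Z.of_nat N)%Z else k m)))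
  end.
Fixpoint box_sumR (d N : nat) (F : (nat -> Z) -> R) : R :=
  match d with
  | O => F (fun _ => 0%Z)
  | S d' => Rsum_range (2 * N + 1) (fun n =>
      box_sumR d' N (fun k => F (fun m =>
        if Nat.eqb m d' then (Z.of_nat n - Z.of_nat N)%Z else k m)))
  end.

Definition zd_series (d : nat) (F : (nat -> Z) -> Cx) : Cx :=
  Clim (fun N => box_sum d N F).

Definition dil (j : nat) (x : nat -> R) (k : nat -> Z) : nat -> R :=
  fun m => 2 ^ j * x m - IZR (k m).

Definition rpow_nn (a q : R) : R := if Rle_dec a 0 then 0 else Rpower a q.

Definition fast_decay (d : nat) (g : (nat -> R) -> Cx) : Prop :=
  forall N : nat, exists CN : R, forall x, inRd d x ->
    Cnorm (g x) <= CN * / (1 + eucl_norm d x) ^ N.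

(** Data: scaling function phi, wavelets psi i (i = 1..2^d-1),
    coefficients Cc k = C_k and c i j k = c^{(i)}_{(j,k)}. *)

Definition Qf (d : nat) (psi : nat -> (nat -> R) -> Cx)
  (c : nat -> nat -> (nat -> Z) -> Cx) (l : nat) (x : nat -> R) : Cx :=
  Csum_range (2 ^ d - 1) (fun i =>
    zd_series d (fun k => Cmul (c (S i) l k) (psi (S i) (dil l x k)))).

Definition Pf (d : nat) (phi : (nat -> R) -> Cx) (psi : nat -> (nat -> R) -> Cx)
  (Cc : (nat -> Z) -> Cx) (c : nat -> nat -> (nat -> Z) -> Cx)
  (j : nat) (x : nat -> R) : Cx :=
  Cadd (zd_series d (fun k => Cmul (Cc k) (phi (dil 0 x k))))
       (Csum_range j (fun l => Qf d psi c l x)).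

Definition Rf (d : nat) (psi : nat -> (nat -> R) -> Cx)
  (c : nat -> nat -> (nat -> Z) -> Cx) (j : nat) (x : nat -> R) : Cx :=
  Clim (fun N => Csum_range N (fun n => Qf d psi c (j + n) x)).

(** Membership of f in B^{s,infty}_p, expressed on its coefficients. *)
Definition besov_coeffs (d : nat) (s p : R) (Cc : (nat -> Z) -> Cx)
  (c : nat -> nat -> (nat -> Z) -> Cx) : Prop :=
  (exists M, forall N, box_sumR d N (fun k => rpow_nn (Cnorm (Cc k)) p) <= M) /\
  (exists M, forall (j N : nat),
     Rpower 2 ((s - INR d / p) * INR j) *
     rpow_nn (Rsum_range (2 ^ d - 1) (fun i =>
                box_sumR d N (fun k => rpow_nn (Cnorm (c (S i) j k)) p))) (1 / p)
     <= M).

(** log|z| / (j log 2), used only when z <> 0. *)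
Definition log2ratio (z : Cx) (j : nat) : R := ln (Cnorm z) / (INR j * ln 2).

(** lim_j log|u_j|/(j log 2) = b (b finite, log 0 = -infty). *)
Definition lim_log2ratio_eq (u : nat -> Cx) (b : R) : Prop :=
  forall eta, 0 < eta -> exists J : nat, forall j, (J <= j)%nat ->
    Cnorm (u j) <> 0 /\ Rabs (log2ratio (u j) j - b) < eta.

Definition E_set (d : nat) (phi : (nat -> R) -> Cx) (psi : nat -> (nat -> R) -> Cx)
  (Cc : (nat -> Z) -> Cx) (c : nat -> nat -> (nat -> Z) -> Cx)
  (beta : R) (x : nat -> R) : Prop :=
  (0 < beta /\ lim_log2ratio_eq (fun j => Pf d phi psi Cc c j x) beta) \/
  (beta < 0 /\ (exists L, Ccv (fun j => Pf d phi psi Cc c j x) L) /\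
     lim_log2ratio_eq (fun j => Rf d psi c j x) beta).

(** liminf_j sup_{l in [(1-eps)j,(1+eps)j] cap N} log|u_l|/(j log 2) >= beta
    (log 0 = -infty). *)
Definition liminf_window_ge (u : nat -> Cx) (eps beta : R) : Prop :=
  forall eta, 0 < eta -> exists J : nat, forall j, (J <= j)%nat ->
    exists l : nat, (1 - eps) * INR j <= INR l <= (1 + eps) * INR j /\
      Cnorm (u l) <> 0 /\ beta - eta <= log2ratio (u l) j.

From Stdlib Require Import Reals Lra Lia ZArith List ClassicalEpsilon Classical.
From Coquelicot Require Import Coquelicot.
Open Scope R_scope.

(* P_{l+1} f(x) = P_l f(x) + Q_l f(x) and, when (P_j f(x)) converges, R_l f(x) = R_{l+1} f(x) + Q_l f(x);
   so |Q_l f(x)| bounds the increments of l |-> |P_l f(x)| (beta > 0), resp. l |-> |R_l f(x)| (beta < 0).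
   If that modulus behaves like 2^{(beta + o(1)) l}, its values at the ends a ~ (1-eps)j and
   b ~ (1+eps)j of the window differ by at least 2^{(beta + delta) j} for some delta > 0, while the
   window contains only O(j) increments; hence one of them exceeds 2^{(beta - eta) j}. *)

Definition two_pow_growth (v : nat -> R) (beta : R) : Prop :=
  forall th, 0 < th -> eventually (fun j =>
    Rpower 2 ((beta - th) * INR j) < v j < Rpower 2 ((beta + th) * INR j)).

Lemma Rpower2_le x y : x <= y -> Rpower 2 x <= Rpower 2 y.
Proof. apply Rle_Rpower; lra. Qed.

Lemma Rpower2_lt_inv x y : Rpower 2 x < Rpower 2 y -> x < y.
Proof. intros H; apply Rnot_le_lt; intros Hyx; apply Rpower2_le in Hyx; lra. Qed.

Lemma Rpower2_pos x : 0 < Rpower 2 x.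
Proof. apply exp_pos. Qed.

Lemma INR_eventually_gt (r : R) : eventually (fun j => r < INR j).
Proof.
  destruct (INR_unbounded r) as [N HN]; exists N; intros j Hj.
  apply le_INR in Hj; lra.
Qed.

Lemma dist_le_of_increments_le (v q : nat -> R) (T : R) (a n : nat) :
  (forall l, Rabs (v (S l) - v l) <= q l) ->
  (forall i, (i < n)%nat -> q (a + i)%nat <= T) ->
  Rabs (v (a + n)%nat - v a) <= INR n * T.
Proof.
  intros Hinc Hq; induction n as [|n IH].
  - rewrite Nat.add_0_r, Rminus_diag, Rabs_R0; simpl; lra.
  - assert (Hn : Rabs (v (a + n)%nat - v a) <= INR n * T)
      by (apply IH; intros i Hi; apply Hq; lia).
    pose proof (Hq n (Nat.lt_succ_diag_r n)) as HqT.
    pose proof (Hinc (a + n)%nat) as Hstep.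
    rewrite S_INR, Nat.add_succ_r.
    replace (v (S (a + n)) - v a) with ((v (S (a + n)) - v (a + n)%nat) + (v (a + n)%nat - v a))
      by ring.
    pose proof (Rabs_triang (v (S (a + n)) - v (a + n)%nat) (v (a + n)%nat - v a)); lra.
Qed.

Lemma increment_exceeds (v q : nat -> R) (T : R) (a n : nat) :
  (forall l, Rabs (v (S l) - v l) <= q l) ->
  INR n * T < Rabs (v (a + n)%nat - v a) ->
  exists i, (i < n)%nat /\ T < q (a + i)%nat.
Proof.
  intros Hinc Hgap; apply NNPP; intros Hno.
  apply (Rlt_not_le _ _ Hgap), (dist_le_of_increments_le v q); [exact Hinc|].
  intros i Hi; apply Rnot_lt_le; intros HT; apply Hno; eauto.
Qed.

Lemma linear_lt_exp_eventually (K d : R) :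
  0 < d -> eventually (fun j => K * INR j < exp (d * INR j)).
Proof.
  intros Hd; apply (filter_imp (fun j => Rmax 1 (4 * Rabs K / (d * d)) < INR j));
    [|apply INR_eventually_gt].
  intros j Hj; set (x := INR j) in *.
  pose proof (Rmax_l 1 (4 * Rabs K / (d * d))) as Hx1.
  pose proof (Rmax_r 1 (4 * Rabs K / (d * d))) as HxK.
  assert (HK : 4 * Rabs K < d * d * x).
  { replace (4 * Rabs K) with (4 * Rabs K / (d * d) * (d * d)) by (field; lra).
    rewrite (Rmult_comm (d * d) x); apply Rmult_lt_compat_r; nra. }
  (* exp (d x) = exp (d x / 2)^2 and exp y > y, so exp (d x) > (d x)^2 / 4 *)
  assert (Hhalf : d * x / 2 < exp (d * x / 2))
    by (pose proof (exp_ineq1 (d * x / 2)); assert (d * x / 2 <> 0) by nra; lra).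
  replace (d * x) with (d * x / 2 + d * x / 2) by field; rewrite exp_plus.
  pose proof (Rle_abs K).
  assert (0 < d * x / 2) by nra.
  assert (d * x / 2 * (d * x / 2) < exp (d * x / 2) * exp (d * x / 2))
    by (apply Rmult_le_0_lt_compat; lra).
  nra.
Qed.
Lemma pow2_gap_eventually (p1 q1 p2 q2 c : R) :
  p2 < p1 -> c < p1 ->
  eventually (fun j => forall B S : R,
    Rpower 2 (p1 * INR j + q1) <= B -> S <= Rpower 2 (p2 * INR j + q2) ->
    2 * INR j * Rpower 2 (c * INR j) < B - S).
Proof.
  intros H12 Hc; pose proof ln_lt_2.
  apply (filter_imp (fun j => (1 - (q1 - q2)) / (p1 - p2) < INR j /\
                              4 / Rpower 2 q1 * INR j < exp ((p1 - c) * ln 2 * INR j))).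
  2: apply filter_and; [apply INR_eventually_gt | apply linear_lt_exp_eventually; nra].
  intros j [Hlin Hexp] B S HB HS; set (x := INR j) in *.
  assert (Hsmall : 2 * Rpower 2 (p2 * x + q2) <= Rpower 2 (p1 * x + q1)).
  { rewrite <- (Rpower_1 2) at 1 by lra; rewrite <- Rpower_plus; apply Rpower2_le.
    assert (1 - (q1 - q2) < x * (p1 - p2)); [|nra].
    replace (1 - (q1 - q2)) with ((1 - (q1 - q2)) / (p1 - p2) * (p1 - p2)) by (field; lra).
    apply Rmult_lt_compat_r; lra. }
  assert (Hlarge : 4 * x * Rpower 2 (c * x) < Rpower 2 (p1 * x + q1)).
  { replace (p1 * x + q1) with ((p1 - c) * x + c * x + q1) by ring; rewrite !Rpower_plus.
    replace (exp ((p1 - c) * ln 2 * x)) with (Rpower 2 ((p1 - c) * x)) in Hexp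
      by (unfold Rpower; f_equal; ring).
    pose proof (Rpower2_pos q1); pose proof (Rpower2_pos (c * x)).
    replace (4 * x) with (4 / Rpower 2 q1 * x * Rpower 2 q1) by (field; lra).
    apply (Rmult_lt_compat_r (Rpower 2 (c * x))) in Hexp; [|lra].
    apply (Rmult_lt_compat_r (Rpower 2 q1)) in Hexp; lra. }
  lra.
Qed.

Lemma window_endpoints_eventually (eps : R) (J : nat) : 0 < eps < 1 ->
  eventually (fun j => exists a b : nat, (J <= a <= b)%nat /\
    (1 - eps) * INR j <= INR a <= (1 - eps) * INR j + 1 /\
    (1 + eps) * INR j - 1 <= INR b <= (1 + eps) * INR j).
Proof.
  intros He; apply (filter_imp (fun j => Rmax (2 / eps) (INR J / (1 - eps)) < INR j));
    [|apply INR_eventually_gt].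
  intros j Hj; set (x := INR j) in *.
  pose proof (Rmax_l (2 / eps) (INR J / (1 - eps))) as H1.
  pose proof (Rmax_r (2 / eps) (INR J / (1 - eps))) as H2.
  assert (Hex : 2 < eps * x).
  { replace 2 with (2 / eps * eps) by (field; lra); rewrite (Rmult_comm eps x).
    apply Rmult_lt_compat_r; lra. }
  assert (HJx : INR J < (1 - eps) * x).
  { replace (INR J) with (INR J / (1 - eps) * (1 - eps)) by (field; lra).
    rewrite (Rmult_comm (1 - eps) x); apply Rmult_lt_compat_r; lra. }
  destruct (nfloor_ex ((1 - eps) * x)) as [n Hn]; [nra|].
  destruct (nfloor_ex ((1 + eps) * x)) as [b Hb]; [nra|].
  exists (S n), b; rewrite S_INR; split; [|lra].
  split; apply INR_le; rewrite ?S_INR; lra.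
Qed.
Lemma window_gap_eventually (v : nat -> R) (beta eps eta : R) (J : nat) :
  beta <> 0 -> 0 < eps < 1 -> 0 < eta ->
  (forall j, (J <= j)%nat ->
     Rpower 2 ((beta - Rabs beta * eps / 2) * INR j) < v j <
     Rpower 2 ((beta + Rabs beta * eps / 2) * INR j)) ->
  eventually (fun j => exists a b : nat, (J <= a <= b)%nat /\
    (1 - eps) * INR j <= INR a /\ INR b <= (1 + eps) * INR j /\
    INR (b - a) * Rpower 2 ((beta - eta) * INR j) < Rabs (v b - v a)).
Proof.
  intros Hb He Heta Hv; set (th := Rabs beta * eps / 2) in Hv.
  (* The endpoint where |v| is large is b when beta > 0 and a when beta < 0. *)
  destruct (Rdichotomy _ _ Hb) as [Hneg|Hpos].
  - assert (Hth : th = - beta * eps / 2) by (unfold th; rewrite Rabs_left; lra).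
    eapply filter_imp; [|apply filter_and; [apply (window_endpoints_eventually eps J He)|
      apply (pow2_gap_eventually ((beta - th) * (1 - eps)) (beta - th)
                                 ((beta + th) * (1 + eps)) (- (beta + th)) (beta - eta)); nra]].
    intros j [(a & b & Hab & Ha & Hb') Hgap]; pose proof (pos_INR j); set (x := INR j) in *.
    exists a, b; do 3 (split; [tauto|]).
    destruct (Hv a) as [Ha0 _]; [lia|]; destruct (Hv b) as [_ Hb0]; [lia|].
    specialize (Hgap (v a) (v b)).
    assert (Hlen : INR (b - a) <= 2 * x) by (rewrite minus_INR by lia; nra).
    pose proof (Rpower2_pos ((beta - eta) * x)); pose proof (Rle_abs (v a - v b)).
    rewrite Rabs_minus_sym.
    enough (2 * x * Rpower 2 ((beta - eta) * x) < v a - v b) by nra.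
    apply Hgap.
    + apply Rle_trans with (Rpower 2 ((beta - th) * INR a)); [apply Rpower2_le | lra].
      assert (beta - th < 0) by nra; nra.
    + apply Rle_trans with (Rpower 2 ((beta + th) * INR b)); [lra | apply Rpower2_le].
      assert (beta + th < 0) by nra; nra.
  - assert (Hth : th = beta * eps / 2) by (unfold th; rewrite Rabs_pos_eq; lra).
    eapply filter_imp; [|apply filter_and; [apply (window_endpoints_eventually eps J He)|
      apply (pow2_gap_eventually ((beta - th) * (1 + eps)) (- (beta - th))
                                 ((beta + th) * (1 - eps)) (beta + th) (beta - eta)); rewrite Hth;
      [nra | assert (0 < beta * (eps * (1 - eps))) by (apply Rmult_lt_0_compat; nra); nra]]].
    intros j [(a & b & Hab & Ha & Hb') Hgap]; pose proof (pos_INR j); set (x := INR j) in *.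
    exists a, b; do 3 (split; [tauto|]).
    destruct (Hv a) as [_ Ha0]; [lia|]; destruct (Hv b) as [Hb0 _]; [lia|].
    specialize (Hgap (v b) (v a)).
    assert (Hlen : INR (b - a) <= 2 * x) by (rewrite minus_INR by lia; nra).
    pose proof (Rpower2_pos ((beta - eta) * x)); pose proof (Rle_abs (v b - v a)).
    enough (2 * x * Rpower 2 ((beta - eta) * x) < v b - v a) by nra.
    apply Hgap.
    + apply Rle_trans with (Rpower 2 ((beta - th) * INR b)); [apply Rpower2_le | lra].
      assert (0 < beta - th) by nra; nra.
    + apply Rle_trans with (Rpower 2 ((beta + th) * INR a)); [lra | apply Rpower2_le].
      assert (0 < beta + th) by nra; nra.
Qed.

Lemma window_increment_lower_bound (v q : nat -> R) (beta eps eta : R) :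
  beta <> 0 -> 0 < eps < 1 -> 0 < eta -> two_pow_growth v beta ->
  (forall l, Rabs (v (S l) - v l) <= q l) ->
  eventually (fun j => exists l : nat, (1 - eps) * INR j <= INR l <= (1 + eps) * INR j /\
    Rpower 2 ((beta - eta) * INR j) < q l).
Proof.
  intros Hb He Heta Hv Hinc.
  assert (Hth : 0 < Rabs beta * eps / 2)
    by (pose proof (Rabs_pos_lt _ Hb); apply Rmult_lt_0_compat; nra).
  destruct (Hv _ Hth) as [J HJ].
  eapply filter_imp; [|apply (window_gap_eventually v beta eps eta J Hb He Heta HJ)].
  intros j (a & b & Hab & Ha & Hb' & Hgap).
  replace b with (a + (b - a))%nat in Hgap at 2 by lia.
  destruct (increment_exceeds v q _ a (b - a) Hinc Hgap) as [i [Hi HT]].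
  exists (a + i)%nat; split; [|exact HT].
  assert (INR a <= INR (a + i) <= INR b) by (split; apply le_INR; lia); lra.
Qed.
Lemma Rpower2_log2ratio (z : Cx) (j : nat) :
  Cnorm z <> 0 -> (0 < j)%nat -> Rpower 2 (log2ratio z j * INR j) = Cnorm z.
Proof.
  intros Hz Hj; pose proof ln_lt_2; pose proof (lt_0_INR _ Hj).
  pose proof (sqrt_pos (fst z ^ 2 + snd z ^ 2)).
  unfold Rpower, log2ratio.
  replace (ln (Cnorm z) / (INR j * ln 2) * INR j * ln 2) with (ln (Cnorm z))
    by (field; split; lra).
  apply exp_ln; unfold Cnorm in *; lra.
Qed.

Lemma two_pow_growth_of_lim_log2ratio (V : nat -> Cx) (beta : R) :
  lim_log2ratio_eq V beta -> two_pow_growth (fun j => Cnorm (V j)) beta.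
Proof.
  intros HV th Hth; destruct (HV th Hth) as [J HJ]; exists (S J); intros j Hj.
  destruct (HJ j) as [Hz Hr]; [lia|].
  pose proof (lt_0_INR j ltac:(lia)); apply Rabs_def2 in Hr.
  rewrite <- (Rpower2_log2ratio (V j) j Hz) by lia.
  split; apply Rpower_lt; try lra; apply Rmult_lt_compat_r; lra.
Qed.

Lemma liminf_window_ge_of_two_pow (Q : nat -> Cx) (eps beta : R) :
  (forall eta, 0 < eta -> eventually (fun j => exists l : nat,
     (1 - eps) * INR j <= INR l <= (1 + eps) * INR j /\
     Rpower 2 ((beta - eta) * INR j) < Cnorm (Q l))) ->
  liminf_window_ge Q eps beta.
Proof.
  intros H eta Heta; destruct (H eta Heta) as [J HJ]; exists (S J); intros j Hj.
  destruct (HJ j) as [l [Hl HT]]; [lia|]; exists l; split; [exact Hl|].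
  assert (Hz : Cnorm (Q l) <> 0) by (pose proof (Rpower2_pos ((beta - eta) * INR j)); lra).
  split; [exact Hz|].
  rewrite <- (Rpower2_log2ratio (Q l) j Hz) in HT by lia.
  apply Rpower2_lt_inv in HT.
  apply (Rmult_le_reg_r (INR j)); [apply lt_0_INR; lia | lra].
Qed.

Lemma liminf_window_ge_of_increments (V Q : nat -> Cx) (beta eps : R) :
  beta <> 0 -> 0 < eps < 1 -> lim_log2ratio_eq V beta ->
  (forall l, Rabs (Cnorm (V (S l)) - Cnorm (V l)) <= Cnorm (Q l)) ->
  liminf_window_ge Q eps beta.
Proof.
  intros Hb He HV Hinc; apply liminf_window_ge_of_two_pow; intros eta Heta.
  apply (window_increment_lower_bound (fun j => Cnorm (V j))); auto.
  apply two_pow_growth_of_lim_log2ratio, HV.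
Qed.

Lemma Cnorm_increment (X Y Z : Cx) : X = Cadd Y Z -> Rabs (Cnorm X - Cnorm Y) <= Cnorm Z.
Proof.
  intros ->; change (Rabs (Cmod (Cplus Y Z) - Cmod Y) <= Cmod Z).
  rewrite !Cmod_norm; eapply Rle_trans; [apply norm_triangle_inv|].
  right; f_equal; change (Cminus (Cplus Y Z) Y = Z).
  apply injective_projections; simpl; ring.
Qed.

Lemma fold_Cadd_init (F : nat -> Cx) (z : Cx) (s : list nat) :
  fold_right (fun i acc => Cadd (F i) acc) z s =
  Cadd (fold_right (fun i acc => Cadd (F i) acc) C0 s) z.
Proof.
  induction s as [|i s IH]; simpl; [|rewrite IH];
    apply injective_projections; simpl; ring.
Qed.

Lemma Csum_range_S (n : nat) (F : nat -> Cx) :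
  Csum_range (S n) F = Cadd (Csum_range n F) (F n).
Proof.
  unfold Csum_range; rewrite seq_S, fold_right_app, fold_Cadd_init.
  apply injective_projections; simpl; ring.
Qed.

Lemma Csum_range_add (l n : nat) (F : nat -> Cx) :
  Csum_range (l + n) F = Cadd (Csum_range l F) (Csum_range n (fun i => F (l + i)%nat)).
Proof.
  induction n as [|n IH].
  - rewrite Nat.add_0_r; apply injective_projections; simpl; ring.
  - rewrite Nat.add_succ_r, !Csum_range_S, IH; apply injective_projections; simpl; ring.
Qed.

Lemma Rlim_eq (u : nat -> R) (L : R) : Un_cv u L -> Rlim u = L.
Proof.
  intros H; apply (UL_sequence u); [|exact H].
  apply (epsilon_spec (inhabits 0) (fun L => Un_cv u L)); exists L; exact H.
Qed.

Lemma Un_cv_tail_sub (u w : nat -> R) (L c : R) (l : nat) :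
  Un_cv u L -> (forall n, w n = u (l + n)%nat - c) -> Un_cv w (L - c).
Proof.
  intros Hu Hw e He; destruct (Hu e He) as [N HN]; exists N; intros n Hn.
  unfold R_dist; rewrite Hw.
  replace (u (l + n)%nat - c - (L - c)) with (u (l + n)%nat - L) by ring.
  apply HN; lia.
Qed.

Section WaveletPartialSums.

Variables (d : nat) (phi : (nat -> R) -> Cx) (psi : nat -> (nat -> R) -> Cx)
  (Cc : (nat -> Z) -> Cx) (c : nat -> nat -> (nat -> Z) -> Cx) (x : nat -> R).

Let P j := Pf d phi psi Cc c j x.
Let Q l := Qf d psi c l x.

Lemma Pf_S (l : nat) : P (S l) = Cadd (P l) (Q l).
Proof.
  unfold P, Q, Pf; rewrite Csum_range_S; apply injective_projections; simpl; ring.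
Qed.

Lemma Pf_add (l n : nat) : P (l + n)%nat = Cadd (P l) (Csum_range n (fun i => Q (l + i)%nat)).
Proof.
  unfold P, Q, Pf; rewrite Csum_range_add; apply injective_projections; simpl; ring.
Qed.

Lemma Rf_eq_limit_sub (L : Cx) (l : nat) :
  Ccv P L -> Rf d psi c l x = (fst L - fst (P l), snd L - snd (P l)).
Proof.
  intros [Hfst Hsnd]; unfold Rf, Clim; f_equal; apply Rlim_eq.
  - apply (Un_cv_tail_sub (fun j => fst (P j)) _ _ _ l Hfst); intros n.
    rewrite Pf_add; unfold Q; simpl; ring.
  - apply (Un_cv_tail_sub (fun j => snd (P j)) _ _ _ l Hsnd); intros n.
    rewrite Pf_add; unfold Q; simpl; ring.
Qed.

Lemma Rf_S (L : Cx) (l : nat) :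
  Ccv P L -> Rf d psi c l x = Cadd (Rf d psi c (S l) x) (Q l).
Proof.
  intros HL; rewrite !(Rf_eq_limit_sub L) by exact HL; rewrite Pf_S.
  apply injective_projections; simpl; ring.
Qed.

End WaveletPartialSums.

Theorem lemma3p4 (d : nat) (Hd : (1 <= d)%nat)
  (phi : (nat -> R) -> Cx) (psi : nat -> (nat -> R) -> Cx)
  (Hphi : fast_decay d phi)
  (Hpsi : forall i, (1 <= i <= 2 ^ d - 1)%nat -> fast_decay d (psi i))
  (s p beta eps : R) (Cc : (nat -> Z) -> Cx) (c : nat -> nat -> (nat -> Z) -> Cx)
  (Hs : 0 <= s) (Hp : 1 <= p) (Hbeta : beta <> 0) (Heps : 0 < eps < 1)
  (Hf : besov_coeffs d s p Cc c) :
  forall x : nat -> R, inRd d x ->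
    E_set d phi psi Cc c beta x ->
    liminf_window_ge (fun l => Qf d psi c l x) eps beta.
Proof.
  intros x _ [[_ HP]|[_ [[L HL] HR]]].
  - apply (liminf_window_ge_of_increments _ _ beta eps Hbeta Heps HP); intros l.
    apply Cnorm_increment, Pf_S.
  - apply (liminf_window_ge_of_increments _ _ beta eps Hbeta Heps HR); intros l.
    rewrite Rabs_minus_sym; apply Cnorm_increment, (Rf_S d phi psi Cc c x L l HL).
Qed.
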